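(* Consider the $Q\times2$ coin problem below with $Q\ge12$, and let $C_1=40$, $C_2=64$. For any algorithm $\mathrm{Alg}$, if \[ N_1\le T_1:=\frac{Q}{4C_1\lambda^2}\quad\text{and}\quad N_2\le T_2:=\frac{Q(\delta+\epsilon)}{4C_2\epsilon^2}, \] then there exists a set $J\subseteq[Q]$ with $|J|\ge\frac{Q}{6}$ such that $\mathbb P_j[\hat\theta=j]\le\frac12$ for all $j\in J$.
   Context: Coin problem: constants $\delta,\lambda,\epsilon\in(0,\frac14]$ and $2Q$ coins arranged in a $Q\times2$ table (rows $1,\dots,Q$, columns $1,2$), one coin per cell. There is an unknown special row $\theta\in[Q]$. In column 1 all coins are fair except the coin in row $\theta$, whose probability of heads is $\frac12+\lambda$. In column 2 all coins have probability of heads $\delta$ except the coin in row $\theta$, with probability of heads $\delta+\epsilon$. An algorithm sequentially chooses coins to flip, each choice possibly depending on all previous outcomes, performs a (possibly random, data-dependent) total of $\tau=N_1+N_2\le H$ flips for a fixed budget $H>0$, where $N_1$ and $N_2$ are the numbers of flips of coins in column 1 and column 2 respectively, and then outputs a prediction $\hat\theta\in[Q]$. For $j\in[Q]$, $\mathbb P_j$ denotes the probability measure induced by the algorithm and the coins when $\theta=j$. *)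

From mathcomp Require Import all_boot all_order all_algebra.
Set Implicit Arguments. Unset Strict Implicit. Unset Printing Implicit Defensive.
Import Order.TTheory GRing.Theory Num.Theory.
Local Open Scope ring_scope.

(* A coin of the Q x 2 table: (row, column) with column false = column 1,
   column true = column 2.  A step of an interaction history: (coin, outcome),
   outcome true = heads. *)
Definition coin (Q : nat) := ('I_Q * bool)%type.
Definition step (Q : nat) := (coin Q * bool)%type.

Section Coins.
Variables (R : realFieldType) (Q : nat) (delta lambda eps : R).

Definition coin_heads (theta : 'I_Q) (c : coin Q) : R :=
  if c.2 then (if c.1 == theta then delta + eps else delta)
  else (if c.1 == theta then 1 / 2 + lambda else 1 / 2).

Definition coin_prob (theta : 'I_Q) (c : coin Q) (o : bool) : R :=
  if o then coin_heads theta c else 1 - coin_heads theta c.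

(* A (behavioural) randomized algorithm:
   act h (Some c) = probability to flip coin c next after history h,
   act h None     = probability to stop after history h,
   pred h k       = probability to output k when stopping after history h. *)
Variables (act : seq (step Q) -> option (coin Q) -> R)
          (pred : seq (step Q) -> 'I_Q -> R).

Definition is_algorithm (H : nat) : Prop :=
  [/\ (forall h a, 0 <= act h a),
      (forall h, \sum_(a : option (coin Q)) act h a = 1),
      (forall h, (H <= size h)%N -> act h None = 1),
      (forall h k, 0 <= pred h k) &
      (forall h, \sum_(k : 'I_Q) pred h k = 1)].

(* probability, under theta, that the interaction starts with history h
   (given the already-performed prefix pre) *)
Fixpoint path_prob_from (theta : 'I_Q) (pre h : seq (step Q)) : R :=
  match h with
  | [::] => 1
  | s :: h' => act pre (Some s.1) * coin_prob theta s.1 s.2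
               * path_prob_from theta (rcons pre s) h'
  end.

Definition path_prob theta h := path_prob_from theta [::] h.

Definition stop_prob theta h := path_prob theta h * act h None.

Definition N1 (h : seq (step Q)) : nat := count (fun s : step Q => ~~ s.1.2) h.
Definition N2 (h : seq (step Q)) : nat := count (fun s : step Q => s.1.2) h.

Definition prob_output (H : nat) (theta k : 'I_Q) : R :=
  \sum_(n < H.+1) \sum_(t : n.-tuple (step Q)) stop_prob theta t * pred t k.

End Coins.

Definition C1 {R : realFieldType} : R := 40.
Definition C2 {R : realFieldType} : R := 64.

From mathcomp Require Import all_boot all_order all_algebra.
From mathcomp Require Import ring lra.
Set Implicit Arguments.
Unset Strict Implicit.
Unset Printing Implicit Defensive.
Import Order.TTheory GRing.Theory Num.Theory.
Local Open Scope ring_scope.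

(* Compare every P_j with the law P_0 of the same algorithm when no row is special
   (column 1 fair, column 2 of bias delta), through the triangular discrimination
   D(a, b) = (a - b)^2 / (a + b) summed over final histories.  Flipping a coin c
   multiplies the weight of a history under P_0 and P_j by the outcome probabilities,
   and raises the summed discrimination by at most P_0(history) * d_j(c), where d_j(c)
   vanishes outside row j and equals 16 lambda^2 / 3 resp. 2 eps^2 / (delta + eps) in
   columns 1 resp. 2 of row j.  Hence sum_j D(P_0, P_j) <= E_0[d_1 N_1 + d_2 N_2]
   <= Q/30 + Q/128 by the flip budgets.  As 5 b - 7 a <= 9 D(a, b), the success
   probability P_j[hat theta = j] is at most 1/2 whenever P_0[hat theta = j] <= 1/4
   and D(P_0, P_j) <= 1/12, and by Markov's inequality at most 4 + 12 (Q/30 + Q/128)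
   <= 5Q/6 rows violate one of these two conditions. *)

Section BigSums.
Variables (R : nmodType) (T : finType).

Lemma big_option (F : option T -> R) :
  \sum_(a : option T) F a = F None + \sum_(x : T) F (Some x).
Proof.
rewrite (bigD1 None) //=; congr (_ + _).
rewrite (reindex_omap Some id) => [|[x|]] //=.
by apply: eq_bigl => x; rewrite eqxx.
Qed.

Definition sum_len n (F : seq T -> R) := \sum_(t : n.-tuple T) F t.

Lemma sum_len0 F : sum_len 0 F = F [::].
Proof. by rewrite /sum_len (big_pred1 [tuple]) // => t; symmetry; apply/eqP; apply: tuple0. Qed.

Lemma sum_lenS n F : sum_len n.+1 F = \sum_(x : T) sum_len n (fun t => F (x :: t)).
Proof.
rewrite /sum_len pair_big /= (reindex (fun p : T * n.-tuple T => [tuple of p.1 :: p.2])) //=.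
exists (fun t : n.+1.-tuple T => (thead t, [tuple of behead t])).
  by move=> [x t] _ /=; rewrite theadE; congr (_, _); apply: val_inj.
by move=> t _; rewrite [t in RHS]tuple_eta.
Qed.

Lemma sum_len_rcons n F : sum_len n.+1 F = sum_len n (fun t => \sum_(x : T) F (rcons t x)).
Proof.
elim: n F => [|n IHn] F; rewrite sum_lenS.
  by rewrite sum_len0; apply: eq_bigr => x _; rewrite sum_len0.
under eq_bigr => x _ do rewrite IHn.
by rewrite sum_lenS.
Qed.

End BigSums.

Section TriangularDiscrimination.
Variable R : realFieldType.
Implicit Types a b q r d w : R.

(* At a = b = 0 the convention x / 0 = 0 gives the intended value 0. *)
Definition tri_disc a b := (a - b) ^+ 2 / (a + b).

Lemma tri_discC a b : tri_disc a b = tri_disc b a.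
Proof. by rewrite /tri_disc [b + a]addrC -opprB sqrrN. Qed.

Lemma tri_disc_ge0 a b : 0 <= a -> 0 <= b -> 0 <= tri_disc a b.
Proof. by move=> a0 b0; rewrite divr_ge0 ?sqr_ge0 ?addr_ge0. Qed.

Lemma tri_discZ k a b : tri_disc (k * a) (k * b) = k * tri_disc a b.
Proof.
rewrite /tri_disc; have [->|k0] := eqVneq k 0; first by rewrite !mul0r subrr expr0n mul0r.
by rewrite -mulrBr -mulrDr exprMn invfM mulrACA expr2 mulfK.
Qed.

Lemma tri_disc0l b : tri_disc 0 b = b.
Proof.
have := tri_discZ b 0 1; rewrite mulr0 mulr1 => ->.
by rewrite /tri_disc sub0r add0r sqrrN expr1n divr1 mulr1.
Qed.

Lemma tri_disc0r a : tri_disc a 0 = a.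
Proof. by rewrite tri_discC tri_disc0l. Qed.

Lemma tri_disc_flip a b q r : 0 < a -> 0 < b -> 0 < q < 1 -> 0 < r < 1 ->
  tri_disc (a * q) (b * r) + tri_disc (a * (1 - q)) (b * (1 - r)) = tri_disc a b +
  4 * a ^+ 2 * b ^+ 2 * (q - r) ^+ 2
    / ((a + b) * (a * q + b * r) * (a * (1 - q) + b * (1 - r))).
Proof.
move=> a0 b0 /andP[q0 q1] /andP[r0 r1].
have S1 : a * q + b * r != 0 by rewrite gt_eqF // addr_gt0 ?mulr_gt0.
have S2 : a * (1 - q) + b * (1 - r) != 0 by rewrite gt_eqF // addr_gt0 ?mulr_gt0 ?subr_gt0.
by rewrite /tri_disc; field; rewrite S1 S2 gt_eqF ?addr_gt0.
Qed.

Lemma tri_disc_flip_le a b q r d : 0 <= a -> 0 <= b -> 0 < q < 1 -> 0 < r < 1 -> 0 <= d ->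
  (0 < a -> 0 < b ->
    4 * a * b ^+ 2 * (q - r) ^+ 2
    <= d * (a + b) * (a * q + b * r) * (a * (1 - q) + b * (1 - r))) ->
  tri_disc (a * q) (b * r) + tri_disc (a * (1 - q)) (b * (1 - r)) <= tri_disc a b + a * d.
Proof.
move=> a0 b0 q01 r01 d0 hd.
have [->|a_neq0] := eqVneq a 0.
  by rewrite !mul0r !tri_disc0l addr0 -mulrDr addrC subrK mulr1.
have [->|b_neq0] := eqVneq b 0.
  by rewrite !mul0r !tri_disc0r -mulrDr addrC subrK mulr1 lerDl mulr_ge0.
have a_gt0 : 0 < a by rewrite lt_def a_neq0.
have b_gt0 : 0 < b by rewrite lt_def b_neq0.
have /andP[q0 q1] := q01; have /andP[r0 r1] := r01.
have D_gt0 : 0 < (a + b) * (a * q + b * r) * (a * (1 - q) + b * (1 - r)).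
  by rewrite !mulr_gt0 ?addr_gt0 ?mulr_gt0 ?subr_gt0.
rewrite tri_disc_flip // lerD2l ler_pdivrMr //.
have -> : 4 * a ^+ 2 * b ^+ 2 * (q - r) ^+ 2 = a * (4 * a * b ^+ 2 * (q - r) ^+ 2) by ring.
rewrite -[X in _ <= X]mulrA ler_pM2l //.
by move: (hd a_gt0 b_gt0); rewrite !mulrA.
Qed.

Lemma tri_disc_lin_bound a b w : 0 <= a -> 0 <= b -> 0 <= w <= 1 ->
  5 * (b * w) - 7 * (a * w) <= 9 * tri_disc a b.
Proof.
move=> a0 b0 /andP[w0 w1].
have [ab0|ab_neq0] := eqVneq (a + b) 0.
  have [-> ->] : a = 0 /\ b = 0 by split; lra.
  by rewrite tri_disc0l !mul0r; lra.
have ab_gt0 : 0 < a + b by rewrite lt_def ab_neq0 addr_ge0.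
have amgm : 5 * b - 7 * a <= 9 * tri_disc a b.
  rewrite -subr_ge0.
  have -> : 9 * tri_disc a b - (5 * b - 7 * a) = 4 * (2 * a - b) ^+ 2 / (a + b).
    by rewrite /tri_disc; field; rewrite gt_eqF.
  by apply: divr_ge0 (ltW ab_gt0); rewrite pmulr_rge0 ?sqr_ge0.
have tri_w : tri_disc a b * w <= tri_disc a b by rewrite ler_piMr ?tri_disc_ge0.
have := ler_wpM2r w0 amgm; rewrite mulrBl; lra.
Qed.

End TriangularDiscrimination.

Section Markov.
Variables (R : realFieldType) (I : finType).

Lemma markov_card_gt (f : I -> R) a : 0 < a -> (forall i, 0 <= f i) ->
  #|[set i | a < f i]|%:R <= (\sum_i f i) / a.
Proof.
move=> a_gt0 f_ge0; rewrite ler_pdivlMr // mulr_natl -sumr_const.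
apply: le_trans (_ : \sum_(i in [set i | a < f i]) f i <= _).
  by apply: ler_sum => i; rewrite inE => /ltW.
by rewrite [X in _ <= X](bigID (mem [set i | a < f i])) /= lerDl sumr_ge0.
Qed.

Lemma markov_card_setCU (f g : I -> R) a b : 0 < a -> 0 < b ->
  (forall i, 0 <= f i) -> (forall i, 0 <= g i) ->
  #|I|%:R <= #|~: ([set i | a < f i] :|: [set i | b < g i])|%:R
               + (\sum_i f i) / a + (\sum_i g i) / b.
Proof.
move=> a_gt0 b_gt0 f_ge0 g_ge0.
rewrite -(cardsC ([set i | a < f i] :|: [set i | b < g i])) natrD addrC -addrA lerD2l.
apply: le_trans (_ : (#|[set i | a < f i]| + #|[set i | b < g i]|)%:R <= _).
  by rewrite ler_nat; apply: leq_of_leqif (leq_card_setU _ _).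
by rewrite natrD lerD ?markov_card_gt.
Qed.

End Markov.

Section Algorithm.
Variables (R : realFieldType) (C : finType) (H : nat).
Variable act : seq (C * bool) -> option C -> R.
Hypotheses (act_ge0 : forall h a, 0 <= act h a)
  (act_sum : forall h, \sum_(a : option C) act h a = 1)
  (act_budget : forall h, (H <= size h)%N -> act h None = 1).
Implicit Types (q r d : C -> R) (h pre : seq (C * bool)).

Definition flip_prob q c (o : bool) := if o then q c else 1 - q c.

Fixpoint path_mass q pre h :=
  if h is s :: h' then act pre (Some s.1) * flip_prob q s.1 s.2 * path_mass q (rcons pre s) h'
  else 1.

Definition hist_mass q h := path_mass q [::] h.

Definition stop_mass q h := hist_mass q h * act h None.

Definition step_cost d h := \sum_(c : C) act h (Some c) * d c.

Definition cost d h := \sum_(s <- h) d s.1.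

Definition expect q (F : seq (C * bool) -> R) :=
  \sum_(n < H.+1) sum_len n (fun t => stop_mass q t * F t).

Definition stop_tri q r :=
  \sum_(n < H.+1) sum_len n (fun t => tri_disc (stop_mass q t) (stop_mass r t)).

Lemma path_mass_rcons q pre h s :
  path_mass q pre (rcons h s)
  = path_mass q pre h * act (pre ++ h) (Some s.1) * flip_prob q s.1 s.2.
Proof.
elim: h pre => [|s' h IHh] pre /=; first by rewrite cats0 mulr1 mul1r.
by rewrite IHh cat_rcons !mulrA.
Qed.

Lemma hist_mass_rcons q h s :
  hist_mass q (rcons h s) = hist_mass q h * act h (Some s.1) * flip_prob q s.1 s.2.
Proof. exact: path_mass_rcons. Qed.

Lemma act_Some_sum h : \sum_(c : C) act h (Some c) = 1 - act h None.
Proof. by rewrite -(act_sum h) big_option addrAC subrr add0r. Qed.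

Lemma act_Some_budget h c : (H <= size h)%N -> act h (Some c) = 0.
Proof.
move=> h_full; have := act_Some_sum h.
by rewrite act_budget // subrr => /psumr_eq0P ->.
Qed.

Lemma big_pair_bool (F : C * bool -> R) :
  \sum_(s : C * bool) F s = \sum_(c : C) (F (c, true) + F (c, false)).
Proof.
rewrite (eq_bigr (fun c => \sum_(o : bool) F (c, o))) => [|c _]; last by rewrite big_bool.
by rewrite pair_big; apply: eq_bigr => -[].
Qed.

Lemma hist_step_additive q d F h :
  (forall s, F (rcons h s) = F h + d s.1) ->
  \sum_(s : C * bool) hist_mass q (rcons h s) * F (rcons h s) + stop_mass q h * F h
  = hist_mass q h * F h + hist_mass q h * step_cost d h.
Proof.
move=> F_rcons; rewrite big_pair_bool.
rewrite (eq_bigr (fun c => hist_mass q h * act h (Some c) * (F h + d c))); last first.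
  by move=> c _; rewrite !hist_mass_rcons !F_rcons /flip_prob /=; ring.
have -> : \sum_c hist_mass q h * act h (Some c) * (F h + d c) =
    hist_mass q h * ((\sum_c act h (Some c)) * F h + step_cost d h).
  by rewrite mulr_suml /step_cost -big_split mulr_sumr; apply: eq_bigr => c _ /=; ring.
by rewrite act_Some_sum /stop_mass; ring.
Qed.

(* Optional stopping for a quantity F that grows by d c whenever coin c is flipped. *)
Lemma expect_additive q d F n :
  (forall h s, F (rcons h s) = F h + d s.1) ->
  \sum_(m < n) sum_len m (fun t => hist_mass q t * step_cost d t) + F [::]
  = \sum_(m < n) sum_len m (fun t => stop_mass q t * F t)
    + sum_len n (fun t => hist_mass q t * F t).
Proof.
move=> F_rcons; elim: n => [|n IHn]; first by rewrite !big_ord0 sum_len0 mul1r.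
have step : sum_len n.+1 (fun t => hist_mass q t * F t)
      + sum_len n (fun t => stop_mass q t * F t)
    = sum_len n (fun t => hist_mass q t * F t)
      + sum_len n (fun t => hist_mass q t * step_cost d t).
  rewrite sum_len_rcons /sum_len -!big_split /=; apply: eq_bigr => t _.
  exact: hist_step_additive.
rewrite !big_ord_recr /=; lra.
Qed.

Lemma hist_mass_over_budget q G : sum_len H.+1 (fun t => hist_mass q t * G t) = 0.
Proof.
rewrite sum_len_rcons /sum_len; apply: big1 => t _; apply: big1 => s _.
by rewrite hist_mass_rcons act_Some_budget ?size_tuple // mulr0 !mul0r.
Qed.

Lemma expect_cost q d :
  expect q (cost d) = \sum_(m < H.+1) sum_len m (fun t => hist_mass q t * step_cost d t).
Proof.
have := @expect_additive q d (cost d) H.+1.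
rewrite hist_mass_over_budget /cost big_nil !addr0 => -> // h s.
by rewrite -cats1 big_cat big_seq1.
Qed.

Lemma eq_expect q F G : (forall h, F h = G h) -> expect q F = expect q G.
Proof. by move=> FG; apply: eq_bigr => n _; apply: eq_bigr => t _; rewrite FG. Qed.

Lemma expect_cst q k : expect q (fun=> k) = k.
Proof.
rewrite /expect; have := @expect_additive q (fun=> 0) (fun=> k) H.+1.
rewrite hist_mass_over_budget addr0 => <-; last by move=> h s; rewrite addr0.
rewrite big1 ?add0r // => m _; apply: big1 => t _.
by rewrite /step_cost big1 ?mulr0 // => c _; rewrite mulr0.
Qed.

Section Probabilities.
Variable q : C -> R.
Hypothesis q01 : forall c, 0 <= q c <= 1.

Lemma flip_prob_ge0 c o : 0 <= flip_prob q c o.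
Proof. by have /andP[] := q01 c; rewrite /flip_prob; case: o; rewrite // subr_ge0. Qed.

Lemma path_mass_ge0 pre h : 0 <= path_mass q pre h.
Proof. by elim: h pre => [|s h IHh] pre //=; rewrite !mulr_ge0 ?flip_prob_ge0. Qed.

Lemma hist_mass_ge0 h : 0 <= hist_mass q h.
Proof. exact: path_mass_ge0. Qed.

Lemma stop_mass_ge0 h : 0 <= stop_mass q h.
Proof. by rewrite mulr_ge0 ?hist_mass_ge0. Qed.

Lemma expect_ge0 F : (forall h, 0 <= F h) -> 0 <= expect q F.
Proof.
move=> F_ge0; apply: sumr_ge0 => n _; apply: sumr_ge0 => t _.
by rewrite mulr_ge0 ?stop_mass_ge0.
Qed.

Lemma ler_expect F G :
  (forall h, 0 < stop_mass q h -> F h <= G h) -> expect q F <= expect q G.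
Proof.
move=> FG; apply: ler_sum => n _; apply: ler_sum => t _.
have [->|t_pos] := eqVneq (stop_mass q t) 0; first by rewrite !mul0r.
by rewrite ler_wpM2l ?stop_mass_ge0 // FG // lt_def t_pos stop_mass_ge0.
Qed.

Lemma path_mass_gt0 r pre h : (forall c, 0 < r c < 1) ->
  0 < path_mass q pre h -> 0 < path_mass r pre h.
Proof.
move=> r01; elim: h pre => [|s h IHh] pre //=.
rewrite mulr_ge0_gt0 ?mulr_ge0 ?flip_prob_ge0 ?path_mass_ge0 // => /andP[].
rewrite mulr_ge0_gt0 ?flip_prob_ge0 // => /andP[act_pos _] /IHh path_pos.
rewrite !mulr_gt0 //; have /andP[r0 r1] := r01 s.1.
by rewrite /flip_prob; case: s.2; rewrite ?subr_gt0.
Qed.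

End Probabilities.

Section Divergence.
Variables (q r d : C -> R).
Hypotheses (q01 : forall c, 0 <= q c <= 1) (r01 : forall c, 0 <= r c <= 1).
Hypothesis tri_flip : forall c a b, 0 <= a -> 0 <= b ->
  tri_disc (a * q c) (b * r c) + tri_disc (a * (1 - q c)) (b * (1 - r c))
  <= tri_disc a b + a * d c.

Lemma stop_tri_ge0 : 0 <= stop_tri q r.
Proof.
apply: sumr_ge0 => n _; apply: sumr_ge0 => t _.
by rewrite tri_disc_ge0 ?stop_mass_ge0.
Qed.

Lemma tri_hist_step h :
  \sum_(s : C * bool) tri_disc (hist_mass q (rcons h s)) (hist_mass r (rcons h s))
    + tri_disc (stop_mass q h) (stop_mass r h)
  <= tri_disc (hist_mass q h) (hist_mass r h) + hist_mass q h * step_cost d h.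
Proof.
set P := hist_mass q h; set P' := hist_mass r h.
have P_ge0 : 0 <= P by apply: hist_mass_ge0.
have P'_ge0 : 0 <= P' by apply: hist_mass_ge0.
have flip c : tri_disc (hist_mass q (rcons h (c, true))) (hist_mass r (rcons h (c, true)))
    + tri_disc (hist_mass q (rcons h (c, false))) (hist_mass r (rcons h (c, false)))
    <= act h (Some c) * (tri_disc P P' + P * d c).
  have act_out u x : u * act h (Some c) * x = act h (Some c) * (u * x) by ring.
  rewrite !hist_mass_rcons /flip_prob /= -/P -/P' !act_out !tri_discZ -mulrDr.
  by apply: ler_wpM2l; [exact: act_ge0 | exact: tri_flip].
rewrite big_pair_bool; apply: le_trans (lerD (ler_sum _ (fun c _ => flip c)) (lexx _)) _.
rewrite /stop_mass -/P -/P' [P * _]mulrC [P' * _]mulrC tri_discZ /step_cost.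
have -> : \sum_c act h (Some c) * (tri_disc P P' + P * d c) =
    (\sum_c act h (Some c)) * tri_disc P P' + P * \sum_c act h (Some c) * d c.
  by rewrite mulr_suml mulr_sumr -big_split; apply: eq_bigr => c _ /=; ring.
rewrite act_Some_sum; lra.
Qed.

Lemma tri_hist_sum_le n :
  \sum_(m < n) sum_len m (fun t => tri_disc (stop_mass q t) (stop_mass r t))
    + sum_len n (fun t => tri_disc (hist_mass q t) (hist_mass r t))
  <= \sum_(m < n) sum_len m (fun t => hist_mass q t * step_cost d t).
Proof.
elim: n => [|n IHn]; first by rewrite !big_ord0 sum_len0 /tri_disc subrr expr0n mul0r addr0.
have step : sum_len n.+1 (fun t => tri_disc (hist_mass q t) (hist_mass r t))
      + sum_len n (fun t => tri_disc (stop_mass q t) (stop_mass r t))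
    <= sum_len n (fun t => tri_disc (hist_mass q t) (hist_mass r t))
      + sum_len n (fun t => hist_mass q t * step_cost d t).
  by rewrite sum_len_rcons /sum_len -!big_split; apply: ler_sum => t _; apply: tri_hist_step.
rewrite !big_ord_recr /=; lra.
Qed.

Lemma stop_tri_le_expect_cost : stop_tri q r <= expect q (cost d).
Proof.
rewrite expect_cost; apply: le_trans (tri_hist_sum_le H.+1); rewrite lerDl.
by apply: sumr_ge0 => t _; rewrite tri_disc_ge0 ?hist_mass_ge0.
Qed.

Lemma stop_tri_lin_bound F : (forall h, 0 <= F h <= 1) ->
  5 * expect r F - 7 * expect q F <= 9 * stop_tri q r.
Proof.
move=> F01; rewrite /expect /stop_tri !mulr_sumr -sumrB; apply: ler_sum => n _.
rewrite /sum_len !mulr_sumr -sumrB; apply: ler_sum => t _.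
by rewrite tri_disc_lin_bound ?stop_mass_ge0.
Qed.

End Divergence.

Lemma expect_sum (I : finType) q (F : I -> seq (C * bool) -> R) :
  \sum_i expect q (F i) = expect q (fun h => \sum_i F i h).
Proof.
rewrite exchange_big; apply: eq_bigr => n _; rewrite /sum_len exchange_big.
by apply: eq_bigr => t _; rewrite mulr_sumr.
Qed.

End Algorithm.

Lemma four_mul_le_sqr (R : realFieldType) (a b : R) : 4 * a * b <= (a + b) ^+ 2.
Proof.
rewrite -subr_ge0 (_ : _ - _ = (a - b) ^+ 2) ?sqr_ge0 //; ring.
Qed.

Section CoinModel.
Variables (R : realFieldType) (Q : nat) (delta lambda eps : R).
Hypotheses (dlt : 0 < delta <= 1 / 4) (lam : 0 < lambda <= 1 / 4) (ept : 0 < eps <= 1 / 4).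

Definition null_heads (c : coin Q) : R := if c.2 then delta else 1 / 2.

Definition col_div (col2 : bool) : R :=
  if col2 then 2 * eps ^+ 2 / (delta + eps) else 16 * lambda ^+ 2 / 3.

Definition flip_div (j : 'I_Q) (c : coin Q) : R := if c.1 == j then col_div c.2 else 0.

Lemma fair_flip_bound a b : 0 < a -> 0 < b ->
  4 * a * b ^+ 2 * (1 / 2 - (1 / 2 + lambda)) ^+ 2 <= col_div false * (a + b)
    * (a * (1 / 2) + b * (1 / 2 + lambda)) * (a * (1 - 1 / 2) + b * (1 - (1 / 2 + lambda))).
Proof.
move=> a0 b0; have /andP[l0 l4] := lam.
have lam2 : lambda ^+ 2 <= 1 / 16 by nra.
have b2 : b ^+ 2 * lambda ^+ 2 <= (a + b) ^+ 2 / 16 by nra.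
have lhs : 4 * a * b ^+ 2 * (1 / 2 - (1 / 2 + lambda)) ^+ 2 <= lambda ^+ 2 * (a + b) ^+ 3.
  have -> : 4 * a * b ^+ 2 * (1 / 2 - (1 / 2 + lambda)) ^+ 2 = lambda ^+ 2 * b * (4 * a * b).
    by ring.
  rewrite (_ : _ * _ ^+ 3 = lambda ^+ 2 * (a + b) * (a + b) ^+ 2); last by ring.
  apply: ler_pM (four_mul_le_sqr a b); rewrite ?mulr_ge0 ?sqr_ge0 ?ltW //.
  by rewrite ltr_pM2l ?exprn_gt0 // ltrDr.
have -> : col_div false * (a + b) * (a * (1 / 2) + b * (1 / 2 + lambda))
    * (a * (1 - 1 / 2) + b * (1 - (1 / 2 + lambda)))
    = 16 * lambda ^+ 2 / 3 * (a + b) * ((a + b) ^+ 2 / 4 - b ^+ 2 * lambda ^+ 2).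
  by rewrite /col_div; field.
apply: le_trans lhs _; rewrite -subr_ge0.
rewrite (_ : _ - _
    = 16 * lambda ^+ 2 / 3 * (a + b) * ((a + b) ^+ 2 / 16 - b ^+ 2 * lambda ^+ 2)).
  apply: mulr_ge0; last by rewrite subr_ge0.
  have : 0 <= lambda ^+ 2 * (a + b) by rewrite mulr_ge0 ?sqr_ge0 ?addr_ge0 ?ltW.
  lra.
by field.
Qed.

Lemma biased_flip_bound a b : 0 < a -> 0 < b ->
  4 * a * b ^+ 2 * (delta - (delta + eps)) ^+ 2 <= col_div true * (a + b)
    * (a * delta + b * (delta + eps)) * (a * (1 - delta) + b * (1 - (delta + eps))).
Proof.
move=> a0 b0; have /andP[d0 d4] := dlt; have /andP[e0 e4] := ept.
have de0 : 0 < delta + eps by rewrite addr_gt0.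
have col_pos : 0 < col_div true * (a + b).
  by rewrite mulr_gt0 ?addr_gt0 // divr_gt0 ?mulr_gt0 ?exprn_gt0.
have heads_ge : b * (delta + eps) <= a * delta + b * (delta + eps).
  by rewrite lerDr mulr_ge0 ?ltW.
have tails_ge : (a + b) / 2 <= a * (1 - delta) + b * (1 - (delta + eps)).
  have : a * delta <= a * (1 / 4) by rewrite ler_pM2l.
  have : b * (delta + eps) <= b * (1 / 2) by rewrite ler_pM2l //; lra.
  lra.
rewrite (_ : 4 * a * _ * _ = eps ^+ 2 * b * (4 * a * b)); last by ring.
apply: le_trans (_ : eps ^+ 2 * b * (a + b) ^+ 2 <= _).
  by rewrite ler_pM2l ?mulr_gt0 ?exprn_gt0 // four_mul_le_sqr.
rewrite (_ : eps ^+ 2 * b * _ = col_div true * (a + b) * (b * (delta + eps)) * ((a + b) / 2)).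
  apply: ler_pM => //; last by rewrite ler_pM2l.
    exact: ltW (mulr_gt0 col_pos (mulr_gt0 b0 de0)).
  by rewrite divr_ge0 ?addr_ge0 ?ltW.
by rewrite /col_div; field; rewrite gt_eqF.
Qed.

Lemma col_div_ge0 col2 : 0 <= col_div col2.
Proof.
have /andP[d0 _] := dlt; have /andP[e0 _] := ept.
by rewrite /col_div; case: col2; apply: divr_ge0; nra.
Qed.

Lemma null_heads_gt0_lt1 c : 0 < null_heads c < 1.
Proof. by have /andP[d0 d4] := dlt; rewrite /null_heads; case: c.2; apply/andP; split; lra. Qed.

Lemma null_heads01 c : 0 <= null_heads c <= 1.
Proof. by have /andP[/ltW -> /ltW ->] := null_heads_gt0_lt1 c. Qed.

Lemma coin_heads_gt0_lt1 (j : 'I_Q) (c : coin Q) :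
  0 < coin_heads delta lambda eps j c < 1.
Proof.
have /andP[d0 d4] := dlt; have /andP[l0 l4] := lam; have /andP[e0 e4] := ept.
by rewrite /coin_heads; case: c.2; case: (c.1 == j); apply/andP; split; lra.
Qed.

Lemma coin_heads01 (j : 'I_Q) (c : coin Q) : 0 <= coin_heads delta lambda eps j c <= 1.
Proof. by have /andP[/ltW -> /ltW ->] := coin_heads_gt0_lt1 j c. Qed.

Lemma null_special_flip (j : 'I_Q) (c : coin Q) a b : 0 <= a -> 0 <= b ->
  tri_disc (a * null_heads c) (b * coin_heads delta lambda eps j c)
    + tri_disc (a * (1 - null_heads c)) (b * (1 - coin_heads delta lambda eps j c))
  <= tri_disc a b + a * flip_div j c.
Proof.
move=> a0 b0; have q01 := null_heads_gt0_lt1 c.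
rewrite /flip_div; case: eqP => [cj|/eqP/negbTE cj].
  apply: tri_disc_flip_le; rewrite ?coin_heads_gt0_lt1 ?col_div_ge0 // => a_gt0 b_gt0.
  rewrite /null_heads /coin_heads cj eqxx.
  by case: c.2; [apply: biased_flip_bound | apply: fair_flip_bound].
have -> : coin_heads delta lambda eps j c = null_heads c by rewrite /coin_heads cj.
by apply: tri_disc_flip_le => // _ _; rewrite subrr expr0n mulr0 !mul0r.
Qed.

Lemma sum_cost_flip_div (h : seq (step Q)) :
  \sum_j cost (flip_div j) h = cost (fun c : coin Q => col_div c.2) h.
Proof.
rewrite /cost exchange_big; apply: eq_bigr => s _.
by rewrite /flip_div -big_mkcond (big_pred1 s.1.1) // => i; rewrite eq_sym.
Qed.

Lemma cost_col_div (h : seq (step Q)) : cost (fun c : coin Q => col_div c.2) h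
  = col_div false * (N1 h)%:R + col_div true * (N2 h)%:R.
Proof.
elim: h => [|s h IHh]; first by rewrite /cost big_nil !mulr0 addr0.
rewrite /cost in IHh *; rewrite big_cons IHh /N1 /N2 /=.
by case: s.1.2; rewrite /= natrD; ring.
Qed.

Section Interaction.
Variables (H : nat) (act : seq (step Q) -> option (coin Q) -> R).
Hypotheses (act_ge0 : forall h a, 0 <= act h a) (act_sum : forall h, \sum_a act h a = 1)
  (act_budget : forall h, (H <= size h)%N -> act h None = 1).
Hypothesis flip_budget : forall (j : 'I_Q) (h : seq (step Q)),
  0 < stop_prob delta lambda eps act j h ->
  (N1 h)%:R <= Q%:R / (4 * C1 * lambda ^+ 2) /\
  (N2 h)%:R <= Q%:R * (delta + eps) / (4 * C2 * eps ^+ 2).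

Lemma path_prob_fromE (j : 'I_Q) pre h :
  path_prob_from delta lambda eps act j pre h
  = path_mass act (coin_heads delta lambda eps j) pre h.
Proof. by elim: h pre => //= s h IHh pre; rewrite IHh. Qed.

Lemma stop_probE (j : 'I_Q) h :
  stop_prob delta lambda eps act j h = stop_mass act (coin_heads delta lambda eps j) h.
Proof. by rewrite /stop_prob /path_prob path_prob_fromE. Qed.

Lemma prob_outputE pred (j k : 'I_Q) : prob_output delta lambda eps act pred H j k
  = expect H act (coin_heads delta lambda eps j) (fun h => pred h k).
Proof. by apply: eq_bigr => n _; apply: eq_bigr => t _; rewrite stop_probE. Qed.

(* The budgets are only granted under some P_j0, but every history that P_0 can
   produce is also produced by P_j0, whose coins are never deterministic. *)
Lemma expect_null_cost_le (j0 : 'I_Q) :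
  expect H act null_heads (cost (fun c : coin Q => col_div c.2)) <= Q%:R / 30 + Q%:R / 128.
Proof.
rewrite -[X in _ <= X](expect_cst act_ge0 act_sum act_budget null_heads).
apply: ler_expect => // [|h]; first exact: null_heads01.
rewrite /stop_mass mulr_ge0_gt0 ?hist_mass_ge0 //; last exact: null_heads01.
case/andP=> /(path_mass_gt0 act_ge0 null_heads01) hist_pos stop_pos.
have /flip_budget[N1h N2h] : 0 < stop_prob delta lambda eps act j0 h.
  by rewrite stop_probE mulr_gt0 // hist_pos // => c; apply: coin_heads_gt0_lt1.
rewrite cost_col_div; apply: le_trans (lerD (ler_wpM2l (col_div_ge0 _) N1h)
                                            (ler_wpM2l (col_div_ge0 _) N2h)) _.
have /andP[d0 _] := dlt; have /andP[l0 _] := lam; have /andP[e0 _] := ept.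
have -> : col_div false * (Q%:R / (4 * C1 * lambda ^+ 2)) = Q%:R / 30.
  by rewrite /col_div /C1; field; rewrite gt_eqF.
have -> : col_div true * (Q%:R * (delta + eps) / (4 * C2 * eps ^+ 2)) = Q%:R / 128.
  by rewrite /col_div /C2; field; rewrite !gt_eqF ?addr_gt0.
by [].
Qed.

Lemma sum_stop_tri_le (j0 : 'I_Q) :
  \sum_j stop_tri H act null_heads (coin_heads delta lambda eps j) <= Q%:R / 30 + Q%:R / 128.
Proof.
apply: le_trans (expect_null_cost_le j0).
rewrite -(eq_expect _ _ _ sum_cost_flip_div) -expect_sum; apply: ler_sum => j _.
apply: stop_tri_le_expect_cost => //; first exact: null_heads01.
  exact: coin_heads01.
by move=> c a b; apply: null_special_flip.
Qed.

End Interaction.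

End CoinModel.

Theorem lemma7 (R : realFieldType) (Q H : nat) (delta lambda eps : R)
    (act : seq (step Q) -> option (coin Q) -> R)
    (pred : seq (step Q) -> 'I_Q -> R) :
  (12 <= Q)%N ->
  0 < delta <= 1 / 4 -> 0 < lambda <= 1 / 4 -> 0 < eps <= 1 / 4 ->
  is_algorithm act pred H ->
  (forall (j : 'I_Q) (h : seq (step Q)),
      0 < stop_prob delta lambda eps act j h ->
      (N1 h)%:R <= Q%:R / (4 * C1 * lambda ^+ 2) /\
      (N2 h)%:R <= Q%:R * (delta + eps) / (4 * C2 * eps ^+ 2)) ->
  exists J : {set 'I_Q},
    (Q%:R / 6 : R) <= #|J|%:R /\
    forall j : 'I_Q, j \in J ->
      prob_output delta lambda eps act pred H j j <= 1 / 2.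
Proof.
move=> Q12 dlt lam ept [act_ge0 act_sum act_budget pred_ge0 pred_sum] flip_budget.
have q01 := null_heads01 (Q := Q) dlt; have qj01 := coin_heads01 (Q := Q) dlt lam ept.
have pred01 h j : 0 <= pred h j <= 1.
  by rewrite pred_ge0 -(pred_sum h) (bigD1 j) //= lerDl sumr_ge0.
pose x j := expect H act (null_heads delta) (pred^~ j).
pose G j := stop_tri H act (null_heads delta) (coin_heads delta lambda eps j).
have sum_x : \sum_j x j = 1.
  by rewrite expect_sum (eq_expect _ _ _ pred_sum) expect_cst.
have sum_G : \sum_j G j <= Q%:R / 30 + Q%:R / 128.
  have j0 : 'I_Q := Ordinal (leq_trans (isT : (0 < 12)%N) Q12).
  by move: (sum_stop_tri_le dlt lam ept act_ge0 act_sum act_budget flip_budget j0).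
exists (~: ([set j | 1 / 4 < x j] :|: [set j | 1 / 12 < G j])); split.
  have x_ge0 j : 0 <= x j := expect_ge0 H act_ge0 q01 (pred_ge0^~ j).
  have G_ge0 j : 0 <= G j := stop_tri_ge0 H act_ge0 q01 (qj01 j).
  have a_gt0 : (0 : R) < 1 / 4 by lra.
  have b_gt0 : (0 : R) < 1 / 12 by lra.
  have := markov_card_setCU a_gt0 b_gt0 x_ge0 G_ge0; rewrite sum_x card_ord.
  have : (12 : R) <= Q%:R by rewrite ler_nat.
  lra.
move=> j; rewrite !inE negb_or -!leNgt => /andP[xj Gj].
have := stop_tri_lin_bound H act_ge0 q01 (qj01 j) (pred01^~ j).
rewrite -/(x j) -/(G j) -prob_outputE; lra.
Qed.
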